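(* Consider the search tree built by the POMCP++ simulation process described in the context, with $\epsilon_z<0$. Let $h\bm a$ be a belief-action node and $h\bm a\bm z$ one of its child belief nodes. If $h\bm a$ is visited infinitely often, then with probability $1$ the node $h\bm a\bm z$ is visited infinitely often.
   Context: POMCP++ builds a search tree whose nodes alternate between belief nodes (the root, or histories $h=(\bm a_0,\bm z_0,\dots,\bm z_t)$ ending with a measurement) and belief-action nodes (histories $h\bm a$ ending with an action). The action set $\mathcal A_m$ is finite. The process runs an infinite sequence of simulation episodes; each episode starts at the root and descends. At an already expanded belief node $h$ (a ''visit'' of $h$), an action is selected by the $\epsilon$-greedy rule: with probability $1-\epsilon_a$ the action maximizing the current value estimate $V(h\bm a)$ is chosen, and with probability $\epsilon_a$ an action is chosen uniformly at random from $\mathcal A_m$, the randomization being drawn freshly and independently of the past at each visit; the episode then visits $h\bm a$. At a belief-action node $h\bm a$ having $c$ existing child belief nodes, with probability $(c+1)^{\epsilon_z}$ (where $\epsilon_z<0$ is a parameter) a new measurement is sampled from a continuous distribution and a new child belief node $h\bm a\bm z$ is created (almost surely distinct from existing children), after which the descent stops (a rollout is performed); otherwise one of the $c$ existing children is chosen uniformly at random and the descent continues into it (a visit of that child). A newly reached unexpanded belief node is expanded (its belief-action children are created) and the descent stops. Descent also stops at depths $d$ with $\gamma^d<\epsilon$ for fixed $\gamma\in(0,1)$, $\epsilon>0$. *)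

From HB Require Import structures.
From mathcomp Require Import all_boot all_order all_algebra.
From mathcomp Require Import all_classical all_reals all_analysis.
Set Implicit Arguments. Unset Strict Implicit. Unset Printing Implicit Defensive.
Import Order.TTheory GRing.Theory Num.Theory.
Local Open Scope classical_set_scope.
Local Open Scope ring_scope.

(* Probability (c+1)^{eps_z} of creating a new child at a belief-action node
   that currently has c children. *)
Definition new_child_prob (R : realType) (epsz : R) (c : nat) : R :=
  (c.+1)%:R `^ epsz.

(* The progressive-widening decision at one visit of the belief-action node,
   driven by a fresh uniform random number u in [0,1):
   - None      : a new child is created (probability (c+1)^{eps_z}) and the
                 descent stops there;
   - Some i    : the existing child number i (children numbered 0..c-1 in
                 order of creation) is chosen, uniformly among the c
                 existing children, and visited. *)
Definition pw_decision (R : realType) (epsz : R) (c : nat) (u : R) : option nat :=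
  let p := new_child_prob epsz c in
  if u < p then None else Some (Num.truncn (c%:R * (u - p) / (1 - p))).

(* Number of children of the belief-action node just before its m-th visit
   (m = 0,1,2,...), the node having no child when created. *)
Fixpoint nchildren (T : Type) (R : realType) (epsz : R) (U : nat -> T -> R)
    (w : T) (m : nat) : nat :=
  match m with
  | 0 => 0
  | m'.+1 => let c := nchildren epsz U w m' in
             if pw_decision epsz c (U m' w) is None then c.+1 else c
  end.

Definition decision (T : Type) (R : realType) (epsz : R) (U : nat -> T -> R)
    (w : T) (m : nat) : option nat :=
  pw_decision epsz (nchildren epsz U w m) (U m w).

Definition mutually_independent (d : measure_display) (T : measurableType d)
    (R : realType) (P : probability T R) (X : nat -> T -> R) : Prop :=
  forall (I : seq nat) (B : nat -> set R),
    uniq I -> (forall i, i \in I -> measurable (B i)) ->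
    P (\bigcap_(i in [set i | i \in I]) (X i @^-1` B i)) =
    (\prod_(i <- I) P (X i @^-1` B i))%E.

Definition uniform01 (d : measure_display) (T : measurableType d)
    (R : realType) (P : probability T R) (X : T -> R) : Prop :=
  measurable_fun setT X /\
  forall B : set R, measurable B ->
    P (X @^-1` B) = lebesgue_measure (B `&` `[0%R, 1%R]).

Definition child_visited_io (T : Type) (R : realType) (epsz : R)
    (U : nat -> T -> R) (w : T) (j : nat) : Prop :=
  forall N, exists2 m, (N <= m)%N & decision epsz U w m = Some j.

(* Write p_c = (c+1)^{eps_z} for the probability of creating a new child when
   c children exist.  When j < c, the decision at a visit selects child j
   exactly when the fresh uniform variable falls in an interval of length
   (1 - p_c)/c.  Since eps_z < 0 we have p_c <= p_1 < 1, and since at most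
   M children exist before the M-th visit, this length is at least delta/M
   with delta = 1 - p_1 > 0.  Hence, by independence, the probability of
   missing child j during n consecutive visits starting at visit M is at most
   prod_(k<n) (1 - delta/(M+k)), which tends to 0 because the harmonic series
   diverges.  Missing child j forever after visit N is thus a null event,
   and a countable union over the starting visit N and the number of children
   c at that visit gives the theorem. *)

From HB Require Import structures.
From mathcomp Require Import all_boot all_order all_algebra.
From mathcomp Require Import all_classical all_reals all_analysis.
From mathcomp Require Import ring lra zify.
Import Order.TTheory GRing.Theory Num.Theory.
Local Open Scope classical_set_scope.
Local Open Scope ring_scope.

Section WideningRule.
Context {R : realType} {epsz : R}.
Hypothesis epsz_lt0 : epsz < 0.

Local Notation p := (new_child_prob epsz).

Lemma new_child_prob_gt0 c : 0 < p c.
Proof. by apply: powR_gt0; rewrite ltr0n. Qed.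

(* With a negative exponent, the creation probability decreases in c. *)
Lemma new_child_prob_le1 {c} : (0 < c)%N -> p c <= p 1.
Proof.
move=> c_gt0; rewrite /new_child_prob.
have invE x : x `^ epsz = (x `^ (- epsz))^-1 by rewrite -powRN opprK.
rewrite !invE lef_pV2 ?posrE ?powR_gt0 ?ltr0n //.
by apply: ge0_ler_powR; rewrite ?nnegrE ?ler0n ?ler_nat ?oppr_ge0 ?ltW.
Qed.

Lemma new_child_prob1_lt1 : p 1 < 1.
Proof.
rewrite /new_child_prob lt_neqAle powR_eq1 !negb_or pnatr_eq1 /= -leNgt ler0n.
rewrite lt_eqF //= -[X in _ <= X](powRr0 (2%:R : R)).
by apply: ler_powR; rewrite ?ler1n // ltW.
Qed.

Lemma new_child_prob_lt1 c : (0 < c)%N -> p c < 1.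
Proof.
by move=> c_gt0; apply: le_lt_trans (new_child_prob_le1 c_gt0) new_child_prob1_lt1.
Qed.

Variable j : nat.

(* The decision selects child j iff u lies in [hit_lo c, hit_hi c[. *)
Definition hit_lo (c : nat) : R := p c + j%:R * (1 - p c) / c%:R.
Definition hit_hi (c : nat) : R := p c + j.+1%:R * (1 - p c) / c%:R.

Lemma hit_width c : hit_hi c - hit_lo c = (1 - p c) / c%:R.
Proof. rewrite /hit_hi /hit_lo; ring. Qed.

Lemma new_child_prob_le_hit_lo {c} : (0 < c)%N -> p c <= hit_lo c.
Proof.
move=> c_gt0; rewrite /hit_lo lerDl divr_ge0 ?ler0n // mulr_ge0 ?ler0n //.
by rewrite subr_ge0 ltW // new_child_prob_lt1.
Qed.

Lemma hit_lo_lt_hi c : (0 < c)%N -> hit_lo c < hit_hi c.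
Proof.
move=> c_gt0; rewrite -subr_gt0 hit_width divr_gt0 ?ltr0n //.
by rewrite subr_gt0 new_child_prob_lt1.
Qed.

Lemma hit_hi_le1 {c} : (j < c)%N -> hit_hi c <= 1.
Proof.
move=> jc; have c_gt0 : (0 < c)%N by apply: leq_ltn_trans jc.
have q_gt0 : 0 < 1 - p c by rewrite subr_gt0 new_child_prob_lt1.
rewrite /hit_hi -lerBrDl ler_pdivrMr ?ltr0n // [_ * c%:R]mulrC.
by rewrite ler_pM2r // ler_nat.
Qed.

Lemma pw_decision_hit c u : (j < c)%N -> hit_lo c <= u < hit_hi c ->
  pw_decision epsz c u = Some j.
Proof.
move=> jc /andP[lo_u u_hi]; have c_gt0 : (0 < c)%N by apply: leq_ltn_trans jc.
have q_gt0 : 0 < 1 - p c by rewrite subr_gt0 new_child_prob_lt1.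
have c_neq0 : c%:R != 0 :> R by rewrite pnatr_eq0 -lt0n.
rewrite /pw_decision ltNge (le_trans (new_child_prob_le_hit_lo c_gt0) lo_u) /=.
congr Some; apply: truncn_def.
have loE : j%:R * (1 - p c) = (hit_lo c - p c) * c%:R.
  by rewrite /hit_lo [p c + _]addrC addrK divfK.
have hiE : j.+1%:R * (1 - p c) = (hit_hi c - p c) * c%:R.
  by rewrite /hit_hi [p c + _]addrC addrK divfK.
rewrite -(ler_pM2r q_gt0) -(ltr_pM2r q_gt0) divfK ?gt_eqF // loE hiE.
by apply/andP; split; nra.
Qed.

(* Before visit M at most M children exist, so the hit interval has length
   at least (1 - p 1)/M. *)
Lemma hit_width_ge c M : (0 < c)%N -> (c <= M)%N ->
  (1 - p 1) / M%:R <= hit_hi c - hit_lo c.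
Proof.
move=> c_gt0 cM; rewrite hit_width.
apply: ler_pM; rewrite ?invr_ge0 ?ler0n //.
- by rewrite subr_ge0 ltW // new_child_prob1_lt1.
- by rewrite lerB // new_child_prob_le1.
- by rewrite lef_pV2 ?posrE ?ltr0n ?ler_nat // (leq_trans c_gt0).
Qed.

End WideningRule.
Arguments hit_lo {R} epsz j c.
Arguments hit_hi {R} epsz j c.

Section MissProduct.
Context {R : realType}.

Lemma harmonic_unbounded (K : R) : exists n, K < series harmonic n.
Proof.
apply/not_existsP => /= hK.
have le_K n : series (@harmonic R) n <= K by rewrite leNgt; apply/negP/hK.
apply: (@dvg_harmonic R); apply: nondecreasing_is_cvgn; last first.
  by exists K => _ [n _ <-]; apply: le_K.
move=> n m nm; rewrite /series /= (big_cat_nat (leq0n n) nm) /= lerDl.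
by apply: sumr_ge0 => k _; apply/ltW/harmonic_gt0.
Qed.

Variable del : R.
Hypotheses (del_gt0 : 0 < del) (del_le1 : del <= 1).

(* Upper bound on the probability of missing a target during n visits
   starting at visit M, each visit hitting it with probability >= del/visit. *)
Definition miss_prod (n M : nat) : R := \prod_(k < n) (1 - del / (M + k)%:R).

Lemma miss_prod_ge0 n M : (0 < M)%N -> 0 <= miss_prod n M.
Proof.
move=> M_gt0; apply: prodr_ge0 => k _.
rewrite subr_ge0 ler_pdivrMr ?ltr0n ?addn_gt0 ?M_gt0 // mul1r.
by apply: le_trans del_le1 _; rewrite ler1n addn_gt0 M_gt0.
Qed.

Lemma miss_prod_rec n M : miss_prod n.+1 M = (1 - del / M%:R) * miss_prod n M.+1.
Proof.
rewrite /miss_prod big_ord_recl /= addn0; congr (_ * _).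
by apply: eq_bigr => k _; rewrite /bump /= add1n addSnnS.
Qed.

Lemma miss_prod_sum_le1 n M : (0 < M)%N ->
  miss_prod n M * (1 + \sum_(k < n) del / (M + k)%:R) <= 1.
Proof.
move=> M_gt0; elim: n => [|n IH]; first by rewrite /miss_prod !big_ord0 mul1r addr0.
rewrite /miss_prod !big_ord_recr /= -/(miss_prod n M).
set x := del / _; set S := \sum_(k < n) _ in IH *.
have x_ge0 : 0 <= x by rewrite divr_ge0 ?ler0n ?ltW.
have S_ge0 : 0 <= S by apply: sumr_ge0 => k _; rewrite divr_ge0 ?ler0n ?ltW.
have prod_ge0 := miss_prod_ge0 n M M_gt0.
have : 0 <= miss_prod n M * (x * S + x * x).
  by apply: mulr_ge0 => //; apply: addr_ge0; apply: mulr_ge0.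
nra.
Qed.

(* The product tends to 0, since sum_k del/(M+k) >= del/M * harmonic n. *)
Lemma miss_prod_vanishes {M e} : (0 < M)%N -> 0 < e -> exists n, miss_prod n M < e.
Proof.
move=> M_gt0 e_gt0; have M_pos : 0 < (M%:R : R) by rewrite ltr0n.
have [n hn] := harmonic_unbounded (M%:R / (del * e)); exists n.
set S := \sum_(k < n) del / (M + k)%:R.
have harmonic_le : del / M%:R * series harmonic n <= S.
  rewrite /series /= big_mkord /S mulr_sumr; apply: ler_sum => k _.
  rewrite /harmonic /= -mulrA ler_pM2l // -invfM.
  rewrite lef_pV2 ?posrE ?mulr_gt0 ?ltr0n ?addn_gt0 ?M_gt0 // -natrM ler_nat.
  by rewrite mulnS; nia.
have eS_gt1 : 1 < e * S.
  have c_gt0 : 0 < e * (del / M%:R) by rewrite mulr_gt0 ?divr_gt0.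
  have one : e * (del / M%:R) * (M%:R / (del * e)) = 1.
    by field; rewrite ?gt_eqF.
  rewrite -(ltr_pM2l c_gt0) one in hn.
  by apply: lt_le_trans hn _; rewrite -mulrA ler_pM2l.
have S_ge0 : 0 <= S by apply: sumr_ge0 => k _; rewrite divr_ge0 ?ler0n ?ltW.
have prod_S_le1 : miss_prod n M * (1 + S) <= 1 := miss_prod_sum_le1 n M M_gt0.
have := miss_prod_ge0 n M M_gt0; nra.
Qed.

End MissProduct.

Section MissEvents.
Context {d : measure_display} {T : measurableType d} {R : realType}.
Variables (P : probability T R) (epsz : R) (U : nat -> T -> R).
Hypothesis epsz_lt0 : epsz < 0.
Hypothesis U_indep : mutually_independent P U.
Hypothesis U_unif : forall m, uniform01 P (U m).
Variable j : nat.

Local Notation p := (new_child_prob epsz).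

(* At a visit with c children the variable u falls in exactly one of:
   new_set (a child is created), hit_set (child j is chosen), skip_set. *)
Definition new_set (c : nat) : set R := [set` `]-oo, p c[ ].
Definition hit_set (c : nat) : set R := [set` `[hit_lo epsz j c, hit_hi epsz j c[ ].
Definition skip_set (c : nat) : set R := [set` `[p c, +oo[ ] `\` hit_set c.

Lemma measurable_new_set c : measurable (new_set c).
Proof. exact: measurable_itv. Qed.
Lemma measurable_hit_set c : measurable (hit_set c).
Proof. exact: measurable_itv. Qed.
Lemma measurable_skip_set c : measurable (skip_set c).
Proof. by apply: measurableD; apply: measurable_itv. Qed.

Lemma new_skip_disjoint c : new_set c `&` skip_set c = set0.
Proof.
apply/seteqP; split => // u [/=]; rewrite /new_set /skip_set /= !in_itv /= andbT.
by move=> u_lt [p_le _]; move: (lt_le_trans u_lt p_le); rewrite ltxx.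
Qed.

Lemma new_skip_setC c : (j < c)%N -> new_set c `|` skip_set c = ~` hit_set c.
Proof.
move=> jc; have c_gt0 : (0 < c)%N by apply: leq_ltn_trans jc.
apply/seteqP; split => u /=; rewrite /new_set /skip_set /hit_set /= !in_itv /= ?andbT.
  case=> [u_lt|[_ //]] /andP[lo_u _].
  have := le_trans (new_child_prob_le_hit_lo epsz_lt0 j c_gt0) lo_u.
  by rewrite leNgt u_lt.
by move=> not_hit; have [u_lt|u_ge] := ltP u (p c); [left|right].
Qed.

Lemma measurable_preimage_U m {B} : measurable B -> measurable (U m @^-1` B).
Proof. by move=> mB; rewrite -[_ @^-1` _]setTI; apply: (U_unif m).1. Qed.

(* Child j is missed during the n visits numbered M, ..., M+n-1, the node
   having c children at visit M: each visit either creates a child or skips. *)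
Fixpoint miss (n M c : nat) : set T :=
  if n is n'.+1 then
    (U M @^-1` new_set c `&` miss n' M.+1 c.+1) `|`
    (U M @^-1` skip_set c `&` miss n' M.+1 c)
  else setT.

Lemma measurable_miss n M c : measurable (miss n M c).
Proof.
elim: n M c => [|n IH] M c /=; first exact: measurableT.
by apply: measurableU; apply: measurableI => //; apply: measurable_preimage_U;
  [exact: measurable_new_set | exact: measurable_skip_set].
Qed.

Definition cylinder (M : nat) (B : nat -> set R) : set T :=
  \bigcap_(i in [set i | (i < M)%N]) (U i @^-1` B i).

Lemma measurable_cylinder M B : (forall i, measurable (B i)) ->
  measurable (cylinder M B).
Proof.
by move=> mB; apply: bigcap_measurableType => k _; apply: measurable_preimage_U.
Qed.

Lemma measure_cylinder M B : (forall i, measurable (B i)) ->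
  P (cylinder M B) = (\prod_(i <- iota 0 M) P (U i @^-1` B i))%E.
Proof.
move=> mB; rewrite -U_indep ?iota_uniq //; congr (P _).
by rewrite /cylinder; congr (\bigcap_(i in _) _); apply/seteqP; split => i /=;
  rewrite mem_iota add0n.
Qed.

Definition extend_at (M : nat) (B : nat -> set R) (B' : set R) : nat -> set R :=
  fun i => if i == M then B' else B i.

Lemma measurable_extend_at {M B B'} : (forall i, measurable (B i)) ->
  measurable B' -> forall i, measurable (extend_at M B B' i).
Proof. by move=> mB mB' i; rewrite /extend_at; case: eqP. Qed.

Lemma cylinder_extend M B B' :
  cylinder M B `&` U M @^-1` B' = cylinder M.+1 (extend_at M B B').
Proof.
apply/seteqP; split => w /=.
  move=> [inB inB'] i /= iM; rewrite /extend_at; case: eqP => [->//|/eqP ne].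
  by apply: inB => /=; rewrite ltn_neqAle ne -ltnS.
move=> inB; split; last by have := inB M (ltnSn M); rewrite /extend_at eqxx.
by move=> i /= iM; have := inB i (ltnW iM); rewrite /extend_at (ltn_eqF iM).
Qed.

Lemma measure_cylinder_extend M B B' : (forall i, measurable (B i)) ->
  measurable B' ->
  P (cylinder M B `&` U M @^-1` B') = (P (cylinder M B) * P (U M @^-1` B'))%E.
Proof.
move=> mB mB'; rewrite cylinder_extend !measure_cylinder //;
  last exact: measurable_extend_at.
rewrite -addn1 iotaD big_cat /= big_seq1 add0n /extend_at eqxx.
congr (_ * _)%E; rewrite big_seq_cond [in RHS]big_seq_cond; apply: eq_bigr => i.
by rewrite mem_iota add0n andbT => /ltn_eqF ->.
Qed.

Lemma measure_hit_set M c : (j < c)%N ->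
  P (U M @^-1` hit_set c) = (hit_hi epsz j c - hit_lo epsz j c)%:E.
Proof.
move=> jc; have c_gt0 : (0 < c)%N by apply: leq_ltn_trans jc.
rewrite (U_unif M).2; last exact: measurable_hit_set.
rewrite setIidl; last first.
  move=> u; rewrite /hit_set /= !in_itv /= => /andP[lo_u u_hi]; apply/andP; split.
    apply: le_trans lo_u; apply: le_trans (new_child_prob_le_hit_lo epsz_lt0 j c_gt0).
    exact/ltW/new_child_prob_gt0.
  exact: le_trans (ltW u_hi) (hit_hi_le1 epsz_lt0 j jc).
by rewrite lebesgue_measure_itv /= lte_fin hit_lo_lt_hi // EFinB.
Qed.

Lemma measure_not_hit M c : (j < c)%N ->
  (P (U M @^-1` new_set c) + P (U M @^-1` skip_set c))%E =
  (1 - (hit_hi epsz j c - hit_lo epsz j c))%:E.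
Proof.
move=> jc; rewrite -measureU; first last.
- by rewrite -preimage_setI new_skip_disjoint preimage_set0.
- exact: measurable_preimage_U _ (measurable_skip_set c).
- exact: measurable_preimage_U _ (measurable_new_set c).
rewrite -preimage_setU new_skip_setC // -preimage_setC.
have mhit := measurable_preimage_U M (measurable_hit_set c).
by apply: eq_trans; first apply: probability_setC mhit;
  rewrite measure_hit_set // EFinB.
Qed.

(* delta = 1 - p 1: the hit interval at visit M has length >= delta/M. *)
Definition hit_bound : R := 1 - new_child_prob epsz 1.

Lemma hit_bound_gt0 : 0 < hit_bound.
Proof. by rewrite subr_gt0 new_child_prob1_lt1. Qed.

Lemma hit_bound_le1 : hit_bound <= 1.
Proof. by rewrite lerBlDr lerDl ltW // new_child_prob_gt0. Qed.

Lemma measure_miss_le n : forall M c B, (j < c)%N -> (c <= M)%N ->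
  (forall i, measurable (B i)) ->
  (P (cylinder M B `&` miss n M c) <=
   P (cylinder M B) * (miss_prod hit_bound n M)%:E)%E.
Proof.
elim: n => [|n IH] M c B jc cM mB; first by rewrite setIT /miss_prod big_ord0 mule1.
have c_gt0 : (0 < c)%N by apply: leq_ltn_trans jc.
have M_gt0 : (0 < M)%N by apply: leq_trans cM.
set Bn := extend_at M B (new_set c); set Bs := extend_at M B (skip_set c).
have mnew := measurable_new_set c; have mskip := measurable_skip_set c.
have mBn : forall i, measurable (Bn i) := measurable_extend_at mB mnew.
have mBs : forall i, measurable (Bs i) := measurable_extend_at mB mskip.
have splitE : cylinder M B `&` miss n.+1 M c =
    (cylinder M.+1 Bn `&` miss n M.+1 c.+1) `|` (cylinder M.+1 Bs `&` miss n M.+1 c).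
  by rewrite -!cylinder_extend /= setIUr !setIA.
rewrite splitE measureU; first last.
- apply/seteqP; split => // w [[inBn _] [inBs _]].
  have : (new_set c `&` skip_set c) (U M w).
    by split; [move: (inBn M (ltnSn M)) | move: (inBs M (ltnSn M))];
      rewrite /Bn /Bs /extend_at eqxx.
  by rewrite new_skip_disjoint.
- by apply: measurableI; [apply: measurable_cylinder | apply: measurable_miss].
- by apply: measurableI; [apply: measurable_cylinder | apply: measurable_miss].
apply: le_trans.
  by apply: leeD; apply: IH => //; apply: leqW.
rewrite /Bn /Bs -!cylinder_extend !measure_cylinder_extend //.
rewrite -ge0_muleDl ?mule_ge0 ?measure_ge0 //.
rewrite -ge0_muleDr ?measure_ge0 // measure_not_hit // -muleA -EFinM.
apply: lee_wpmul2l; first exact: measure_ge0.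
rewrite lee_fin miss_prod_rec ler_wpM2r ?miss_prod_ge0 ?hit_bound_le1 //.
by rewrite lerB // hit_width_ge.
Qed.

Lemma nchildren_le w m : (nchildren epsz U w m <= m)%N.
Proof. by elim: m => //= m IH; case: pw_decision => [_|] //; apply: leqW. Qed.

Lemma nchildren_mono w : {homo nchildren epsz U w : m m' / (m <= m')%N}.
Proof.
move=> m m' /subnK <-; elim: (m' - m)%N => //= k IH.
by case: pw_decision => [_|] //; apply: leqW.
Qed.

Lemma nchildren_succ w m : nchildren epsz U w m.+1 =
  if U m w < p (nchildren epsz U w m) then (nchildren epsz U w m).+1
  else nchildren epsz U w m.
Proof. by rewrite /= /pw_decision; case: ifP. Qed.

Lemma miss_of_path n M w :
  (forall k, (M <= k)%N -> decision epsz U w k <> Some j) ->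
  (j < nchildren epsz U w M)%N -> miss n M (nchildren epsz U w M) w.
Proof.
elim: n M => [//|n IH] M no_hit jc /=.
have no_hit' k : (M.+1 <= k)%N -> decision epsz U w k <> Some j.
  by move=> Mk; apply/no_hit/ltnW.
have no_hitM := no_hit M (leqnn M); rewrite /decision in no_hitM.
have [u_lt|u_ge] := ltP (U M w) (p (nchildren epsz U w M)).
  have nextE : nchildren epsz U w M.+1 = (nchildren epsz U w M).+1.
    by rewrite nchildren_succ u_lt.
  left; split; first by rewrite /new_set /= in_itv.
  by rewrite -nextE; apply: IH => //; rewrite nextE ltnW.
have nextE : nchildren epsz U w M.+1 = nchildren epsz U w M.
  by rewrite nchildren_succ ltNge u_ge.
right; split.
  split; first by rewrite /= in_itv /= u_ge.
  by move=> /andP[lo_u u_hi]; apply/no_hitM/pw_decision_hit => //; apply/andP.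
by rewrite -nextE; apply: IH => //; rewrite nextE.
Qed.

Definition miss_forever (N c : nat) : set T := \bigcap_n miss n N c.

Lemma measurable_miss_forever N c : measurable (miss_forever N c).
Proof. by apply: bigcapT_measurable => n; apply: measurable_miss. Qed.

Lemma miss_forever_null N c : (j < c)%N -> (c <= N)%N ->
  P (miss_forever N c) = 0%E.
Proof.
move=> jc cN; have N_gt0 : (0 < N)%N := leq_trans (leq_ltn_trans (leq0n j) jc) cN.
have cylinderT : cylinder N (fun=> setT) = setT by apply/seteqP; split.
have le_prod n : (P (miss_forever N c) <= (miss_prod hit_bound n N)%:E)%E.
  have := measure_miss_le n N c (fun=> setT) jc cN (fun=> measurableT).
  rewrite cylinderT setTI probability_setT mul1e; apply: le_trans.
  apply: le_measure; rewrite ?inE; [exact: measurable_miss_forever|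
    exact: measurable_miss|by move=> w; apply].
apply/eqP; rewrite eq_le measure_ge0 andbT; apply/lee_addgt0Pr => e e_gt0.
have [n prod_lt] := miss_prod_vanishes _ hit_bound_gt0 hit_bound_le1 N_gt0 e_gt0.
by rewrite add0e (le_trans (le_prod n)) // lee_fin ltW.
Qed.

End MissEvents.

(* A path on which child j exists but is eventually never chosen lies in some
   miss_forever N c with j < c <= N, a countable family of null events. *)
Theorem lemma2 (d : measure_display) (T : measurableType d) (R : realType)
    (P : probability T R) (epsz : R) (U : nat -> T -> R) :
  epsz < 0 ->
  mutually_independent P U ->
  (forall m, uniform01 P (U m)) ->
  forall j : nat,
    {ae P, forall w, (exists m, (j < nchildren epsz U w m)%N) ->
                     child_visited_io epsz U w j}.
Proof.
move=> epsz_lt0 U_indep U_unif j.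
pose bad N c := if (j < c <= N)%N then miss_forever epsz U j N c else set0.
have bad_null : P.-negligible (\bigcup_N \bigcup_c bad N c).
  apply: negligible_bigcup => N; apply: negligible_bigcup => c; rewrite /bad.
  case: ifP => [/andP[jc cN]|_]; last exact: negligible_set0.
  exists (miss_forever epsz U j N c); split => //.
    exact: measurable_miss_forever.
  by apply: miss_forever_null.
apply: negligibleS bad_null => w /= not_io; apply: contrapT => not_bad.
apply: not_io => -[m0 jm0] N0; apply: contrapT => never.
pose N := maxn N0 m0; pose c := nchildren epsz U w N.
have jc : (j < c)%N.
  exact: leq_trans jm0 (nchildren_mono epsz U w m0 N (leq_maxr N0 m0)).
apply: not_bad; exists N => //; exists c => //.
rewrite /bad jc nchildren_le /= => n _; apply: miss_of_path => // k Nk hit.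
by apply: never; exists k => //; apply: leq_trans Nk; apply: leq_maxl.
Qed.
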